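(* Let $\mathfrak f$ be a simple compact Lie algebra and $n\in\mathbb N$. Suppose a Lie subalgebra $\mathfrak k\subset n\mathfrak f$ contains $\mathrm{diag}(\mathfrak f)=\{(X,\dots,X):X\in\mathfrak f\}$. Then there is a decomposition $n\mathfrak f=\bigoplus_{i=1}^s n_i\mathfrak f$ into a direct sum of ideals (grouping the $n$ copies of $\mathfrak f$ into $s$ groups of sizes $n_i$), with $s\ge1$, $n_i\ge1$, $\sum_in_i=n$, such that $\mathfrak k=\mathfrak k_1\oplus\cdots\oplus\mathfrak k_s$ with $\mathfrak k_i=\mathrm{diag}(\mathfrak f)\subset n_i\mathfrak f$.
   Context: $n\mathfrak f=\mathfrak f\oplus\cdots\oplus\mathfrak f$ ($n$ copies). *)

From HB Require Import structures.
From mathcomp Require Import all_boot all_order all_algebra.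
Set Implicit Arguments. Unset Strict Implicit. Unset Printing Implicit Defensive.
Import Order.TTheory GRing.Theory Num.Theory.
Local Open Scope ring_scope.

Definition is_lie_bracket (R : fieldType) (V : vectType R) (br : V -> V -> V) : Prop :=
  [/\ (forall (a : R) (x y z : V), br (a *: x + y) z = a *: br x z + br y z),
      (forall (a : R) (x y z : V), br z (a *: x + y) = a *: br z x + br z y),
      (forall x : V, br x x = 0) &
      (forall x y z : V, br x (br y z) + br y (br z x) + br z (br x y) = 0)].

Definition lie_ideal (R : fieldType) (V : vectType R) (br : V -> V -> V)
  (I : {vspace V}) : Prop :=
  forall x y : V, y \in I -> br x y \in I.

Definition lie_simple (R : fieldType) (V : vectType R) (br : V -> V -> V) : Prop :=
  (exists x y : V, br x y != 0) /\
  (forall I : {vspace V}, lie_ideal br I -> I = 0%VS \/ I = fullv).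

(* compact (real) Lie algebra: admits an ad-invariant inner product,
   i.e. a symmetric bilinear positive definite form B with
   B([x,y],z) + B(y,[x,z]) = 0. *)
Definition lie_compact (R : realFieldType) (V : vectType R) (br : V -> V -> V) : Prop :=
  exists B : V -> V -> R,
    [/\ (forall (a : R) (x y z : V), B (a *: x + y) z = a * B x z + B y z),
        (forall x y : V, B x y = B y x),
        (forall x : V, x != 0 -> 0 < B x x) &
        (forall x y z : V, B (br x y) z + B y (br x z) = 0)].

(* n f = f (+) ... (+) f, realized as {ffun 'I_n -> V} with componentwise bracket *)
Definition sum_bracket (R : fieldType) (V : vectType R) (br : V -> V -> V) (n : nat)
  (x y : {ffun 'I_n -> V}) : {ffun 'I_n -> V} :=
  [ffun i => br (x i) (y i)].

Definition diag_elt (R : fieldType) (V : vectType R) (n : nat) (X : V) : {ffun 'I_n -> V} :=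
  [ffun _ => X].

Definition lie_subalgebra (R : fieldType) (V : vectType R) (br : V -> V -> V) (n : nat)
  (k : {vspace {ffun 'I_n -> V}}) : Prop :=
  forall x y, x \in k -> y \in k -> sum_bracket br x y \in k.

From HB Require Import structures.
From mathcomp Require Import all_boot all_order all_algebra.
From Stdlib Require Import Classical.
Import Order.TTheory GRing.Theory Num.Theory.
Local Open Scope ring_scope.

(* Call indices i, j tied when x i = x j for every x in k.  The partition is
   the one into tied classes, and k consists of functions constant on them;
   for the converse it suffices that, for each class C and X in f, the block
   function equal to X on C and 0 elsewhere lies in k.  Fix an index a and a
   list s of indices untied to a.  The values z a of the z in k vanishing on s
   form an ideal of f (bracket with diag(X)), hence 0 or f by simplicity.  It
   is f: for s empty use diag(f); to add an index j untied to a, pick w in k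
   with w j = 0 and w a = X, where [X, z a] <> 0 (f has trivial centre), and
   replace z by [w, z].  Taking for s all indices untied to a yields the block
   function of the class of a. *)

Section FfunLinear.
Context {R : fieldType} {V : vectType R} {I : finType}.

Definition ffun_eval (a : I) (x : {ffun I -> V}) : V := x a.

Lemma ffun_eval_is_linear a : linear (ffun_eval a).
Proof. by move=> c x y; rewrite /ffun_eval !ffunE. Qed.

HB.instance Definition _ a :=
  GRing.isLinear.Build R {ffun I -> V} V _ (ffun_eval a) (ffun_eval_is_linear a).

Definition ffun_mask (s : seq I) (x : {ffun I -> V}) : {ffun I -> V} :=
  [ffun i => if i \in s then x i else 0].

Lemma ffun_mask_is_linear s : linear (ffun_mask s).
Proof.
move=> c x y; apply/ffunP => i; rewrite !ffunE.
by case: ifP => _; rewrite ?ffunE // scaler0 addr0.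
Qed.

HB.instance Definition _ s :=
  GRing.isLinear.Build R {ffun I -> V} {ffun I -> V} _ (ffun_mask s)
    (ffun_mask_is_linear s).

Lemma mem_ker_maskP s (x : {ffun I -> V}) :
  reflect (forall i, i \in s -> x i = 0) (x \in lker (linfun (ffun_mask s))).
Proof.
rewrite memv_ker lfunE /=; apply: (iffP eqP) => [x0 i si | x0].
  by have := congr1 (fun f : {ffun I -> V} => f i) x0; rewrite !ffunE si.
by apply/ffunP => i; rewrite !ffunE; case: ifP => // /x0.
Qed.

End FfunLinear.

Lemma ffun_partition_sum {T : finType} {M : nmodType} {P : {set {set T}}}
    (x : {ffun T -> M}) :
  partition P [set: T] ->
  x = \sum_(B in P) [ffun i => if i \in B then x i else 0].
Proof.
case/and3P => /eqP covP trivP _; have PT i : i \in cover P by rewrite covP.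
apply/ffunP => i; rewrite sum_ffunE (bigD1 (pblock P i)) ?pblock_mem //=.
rewrite ffunE mem_pblock PT big1 ?addr0 // => B /andP [PB /eqP neqB].
rewrite ffunE; case: ifP => // Bi.
by case: neqB; rewrite (def_pblock trivP PB Bi).
Qed.

Section LieBracket.
Context {R : fieldType} {V : vectType R} {br : V -> V -> V}.
Hypothesis lieV : is_lie_bracket br.

Lemma lie_br0r x : br x 0 = 0.
Proof.
case: lieV => _ linr _ _; have /eqP := linr 1 0 0 x.
by rewrite !scale1r addr0 -subr_eq subrr eq_sym => /eqP.
Qed.

Lemma lie_br0l x : br 0 x = 0.
Proof.
case: lieV => linl _ _ _; have /eqP := linl 1 0 0 x.
by rewrite !scale1r addr0 -subr_eq subrr eq_sym => /eqP.
Qed.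

Lemma lie_brZr c x y : br x (c *: y) = c *: br x y.
Proof. by case: lieV => _ linr _ _; have := linr c y 0 x; rewrite !addr0 lie_br0r addr0. Qed.

Lemma lie_brZl c x y : br (c *: x) y = c *: br x y.
Proof. by case: lieV => linl _ _ _; have := linl c x 0 y; rewrite !addr0 lie_br0l addr0. Qed.

Hypothesis simpleV : lie_simple br.

Lemma simple_ideal_full {J : {vspace V}} {v} :
  lie_ideal br J -> v \in J -> v != 0 -> J = fullv.
Proof.
move=> idealJ vJ v_neq0; case: simpleV => _ /(_ J idealJ) [] // J0.
by move: vJ v_neq0; rewrite J0 memv0 => ->.
Qed.

Lemma simple_centre_trivial {U} : U != 0 -> exists X, br X U != 0.
Proof.
move=> U_neq0; apply/not_all_not_ex => centralU.
have brU0 X : br X U = 0 by apply/eqP/negbNE/negP/centralU.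
have idealU : lie_ideal br <[U]>%VS.
  by move=> x y /vlineP [c ->]; rewrite lie_brZr brU0 scaler0 mem0v.
have Ufull := simple_ideal_full idealU (memv_line U) U_neq0.
case: simpleV => [[x [y]]] + _.
have /vlineP [cx ->] : x \in <[U]>%VS by rewrite Ufull memvf.
have /vlineP [cy ->] : y \in <[U]>%VS by rewrite Ufull memvf.
by case: lieV => _ _ alt _; rewrite lie_brZr lie_brZl alt !scaler0 eqxx.
Qed.

End LieBracket.

Section SubalgebraContainingDiagonal.
Context {R : fieldType} {V : vectType R} {br : V -> V -> V} {n : nat}.
Variable k : {vspace {ffun 'I_n -> V}}.
Hypotheses (lieV : is_lie_bracket br) (simpleV : lie_simple br).
Hypotheses (subalg_k : lie_subalgebra br k) (diag_k : forall X, diag_elt n X \in k).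

Definition tied (a j : 'I_n) : bool :=
  (k <= lker (linfun (ffun_eval a) - linfun (ffun_eval j)))%VS.

Lemma tiedP a j : reflect (forall x, x \in k -> x a = x j) (tied a j).
Proof. by apply: (iffP eqlfun_inP) => tied_aj x /tied_aj; rewrite !lfunE. Qed.

Lemma tied_equiv : equivalence_rel tied.
Proof.
move=> a b c; split; first by apply/tiedP.
move=> /tiedP tied_ab; apply/idP/idP => /tiedP tied_c; apply/tiedP => x xk.
  by rewrite -tied_ab ?tied_c.
by rewrite tied_ab ?tied_c.
Qed.

Definition vanishing_image (a : 'I_n) (s : seq 'I_n) : {vspace V} :=
  (linfun (ffun_eval a) @: (k :&: lker (linfun (ffun_mask s))))%VS.

Lemma vanishing_image_ideal a s : lie_ideal br (vanishing_image a s).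
Proof.
move=> X y /memv_imgP [z]; rewrite memv_cap => /andP [zk /mem_ker_maskP zs] ->.
have -> : br X (linfun (ffun_eval a) z) =
          linfun (ffun_eval a) (sum_bracket br (diag_elt n X) z).
  by rewrite !lfunE /= /ffun_eval !ffunE.
apply: memv_img; rewrite memv_cap subalg_k //=; apply/mem_ker_maskP => i /zs zi.
by rewrite ffunE zi (lie_br0r lieV).
Qed.

Lemma vanishing_image_full {a} {s : seq 'I_n} {z} :
    z \in k -> (forall i, i \in s -> z i = 0) -> z a != 0 ->
  forall X, exists w, [/\ w \in k, (forall i, i \in s -> w i = 0) & w a = X].
Proof.
move=> zk zs za_neq0 X.
have za : z a \in vanishing_image a s.
  have -> : z a = linfun (ffun_eval a) z by rewrite lfunE.
  by apply: memv_img; rewrite memv_cap zk; apply/mem_ker_maskP.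
have := memvf X.
rewrite -(simple_ideal_full simpleV (vanishing_image_ideal a s) za za_neq0).
case/memv_imgP => w; rewrite memv_cap lfunE => /andP [wk /mem_ker_maskP ws] ->.
by exists w.
Qed.

Lemma untied_separate {a j} : ~~ tied a j ->
  forall X, exists w, [/\ w \in k, w j = 0 & w a = X].
Proof.
case/subvPn=> x xk; rewrite memv_ker !lfunE /= !lfunE /= lfunE subr_eq0 => xaj X.
have zk : x - diag_elt n (x j) \in k by rewrite memvB.
have [||w [wk wj wa]] := @vanishing_image_full a [:: j] _ zk _ _ X.
- by move=> i; rewrite inE => /eqP ->; rewrite !ffunE subrr.
- by rewrite !ffunE subr_eq0.
by exists w; split => //; apply: wj; rewrite inE.
Qed.

Lemma untied_vanishing_nonzero a (s : seq 'I_n) :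
    (forall j, j \in s -> ~~ tied a j) ->
  exists z, [/\ z \in k, (forall i, i \in s -> z i = 0) & z a != 0].
Proof.
elim: s => [_ | j s IHs untied_js].
  case: simpleV => [[x [y brxy]]] _.
  have x_neq0 : x != 0 by apply: contraNneq brxy => ->; rewrite (lie_br0l lieV).
  by exists (diag_elt n x); rewrite ffunE.
have [|z [zk zs za]] := IHs.
  by move=> i si; rewrite untied_js // inE si orbT.
have [X brXza] := simple_centre_trivial lieV simpleV za.
have [w [wk wj wa]] := untied_separate (untied_js j (mem_head _ _)) X.
exists (sum_bracket br w z); split; first exact: subalg_k.
  by move=> i; rewrite inE ffunE => /orP [/eqP -> | /zs ->];
     rewrite ?wj ?(lie_br0l lieV) ?(lie_br0r lieV).
by rewrite ffunE wa.
Qed.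

Lemma tied_block_in a X : [ffun i => if tied a i then X else 0] \in k.
Proof.
pose s := [seq j <- enum 'I_n | ~~ tied a j].
have [|z [zk zs za]] := @untied_vanishing_nonzero a s.
  by move=> j; rewrite mem_filter => /andP [].
have [w [wk ws wa]] := vanishing_image_full zk zs za X.
suff -> : [ffun i => if tied a i then X else 0] = w by [].
apply/ffunP => i; rewrite ffunE; case: ifP => tied_ai.
  by rewrite -wa; move/tiedP: tied_ai => /(_ w wk).
by rewrite ws // mem_filter tied_ai mem_enum.
Qed.

Definition tied_classes := equivalence_partition tied [set: 'I_n].

Lemma tied_classes_partition : partition tied_classes [set: 'I_n].
Proof. exact: equivalence_partitionP (in3W tied_equiv). Qed.

Lemma mem_tied_class {B i j} : B \in tied_classes -> i \in B -> (j \in B) = tied i j.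
Proof.
case/and3P: tied_classes_partition => _ trivP _ PB Bi.
by rewrite -(def_pblock trivP PB Bi) pblock_equivalence_partition ?inE //;
  apply: in3W tied_equiv.
Qed.

Lemma mem_k_classwise_constant x : x \in k <->
  (forall B, B \in tied_classes -> forall i j, i \in B -> j \in B -> x i = x j).
Proof.
split=> [xk B PB i j Bi Bj | constx].
  by move: xk; apply/tiedP; rewrite -(mem_tied_class PB Bi).
rewrite (ffun_partition_sum x tied_classes_partition); apply: memv_suml => B PB.
have [B0 | [b Bb]] := set_0Vmem B.
  by case/and3P: tied_classes_partition => _ _; rewrite -B0 PB.
suff -> : [ffun i => if i \in B then x i else 0] =
          [ffun i => if tied b i then x b else 0] by apply: tied_block_in.
apply/ffunP => i; rewrite !ffunE -(mem_tied_class PB Bb).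
by case: ifP => // Bi; rewrite (constx B PB b i).
Qed.

End SubalgebraContainingDiagonal.

Theorem mainTheorem8 (R : rcfType) (V : vectType R) (br : V -> V -> V) (n : nat)
  (k : {vspace {ffun 'I_n -> V}}) :
  is_lie_bracket br -> lie_simple br -> lie_compact br ->
  (0 < n)%N ->
  lie_subalgebra br k ->
  (forall X : V, diag_elt n X \in k) ->
  exists P : {set {set 'I_n}},
    [/\ partition P [set: 'I_n], (1 <= #|P|)%N &
        forall x : {ffun 'I_n -> V},
          x \in k <-> (forall B, B \in P -> forall i j, i \in B -> j \in B -> x i = x j)].
Proof.
move=> lieV simpleV _ n_gt0 subalg_k diag_k.
have partP := tied_classes_partition k.
exists (tied_classes k); split=> //.
  apply/card_gt0P; exists (pblock (tied_classes k) (Ordinal n_gt0)).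
  by case/and3P: partP => /eqP covP _ _; rewrite pblock_mem // covP inE.
exact: mem_k_classwise_constant lieV simpleV subalg_k diag_k.
Qed.
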